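(* Let $d,n,k\in\mathbb{N}^+$. Let $S_n=2^{-n+3}\{0,1,\dots,\lfloor 2^n n^{-2}\rfloor\}^d\subset\mathbb{R}^d$ and $s_n=\#S_n$. Let $\{X_i\}_{i\ge1}$ be i.i.d. random variables, each uniformly distributed on $S_n$ (i.e. $\Pr(X_i=y)=1/s_n$ for every $y\in S_n$), and let $\mathcal{F}_i=\sigma(X_j:1\le j\le i-1)$, with $\mathcal{F}_1$ trivial. Then there exists $\ell\in\mathbb{N}^+$ such that for every sequence $\{y_i\}_{i\ge1}$ of $\mathbb{R}^d$-valued random variables with $y_i$ being $\mathcal{F}_i$-measurable for each $i$, we have \[ \Pr\left(N_n\left(\bigcup_{i=1}^{\ell}\{X_i+y_i\}\right)<s_n\right)\le\frac{1}{k\,2^n}. \]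
   Context: For a subset $X\subset\mathbb{R}^d$ (Euclidean metric), $N_n(X)$ denotes the maximal cardinality of a subset $S\subset X$ such that any two distinct points of $S$ are at distance $>2^{-n}$. $\lfloor x\rfloor$ is the integer part of $x$. *)

From Stdlib Require Import Reals ClassicalEpsilon.
From mathcomp Require Import all_boot.
Set Implicit Arguments. Unset Strict Implicit. Unset Printing Implicit Defensive.

Local Open Scope R_scope.

Definition point (d : nat) := 'I_d -> R.

Definition edist (d : nat) (p q : point d) : R :=
  sqrt (foldr Rplus 0 (map (fun j => (p j - q j) ^ 2) (enum 'I_d))).

Definition padd (d : nat) (p q : point d) : point d := fun j => p j + q j.

Definition separated_in (d n : nat) (X : point d -> Prop) (S : list (point d)) : Prop :=
  (forall p, List.In p S -> X p) /\
  (forall i j, (i < size S)%N -> (j < size S)%N -> i <> j ->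
      edist (nth (fun _ => 0) S i) (nth (fun _ => 0) S j) > / 2 ^ n).

(* "N_n(X) < m": every 2^{-n}-separated subset of X has fewer than m points,
   i.e. the maximal cardinality N_n(X) of such subsets is < m. *)
Definition Nn_lt (d n : nat) (X : point d -> Prop) (m : nat) : Prop :=
  forall S, separated_in n X S -> (size S < m)%N.

Definition gmax (n : nat) : nat := (2 ^ n %/ n ^ 2)%N.
Definition gidx (d n : nat) : finType := {ffun 'I_d -> 'I_(gmax n).+1}.

(* The grid point 2^{-n+3} * g of S_n (the map g |-> gpt g is injective,
   so the uniform law on gidx d n is the uniform law on S_n). *)
Definition gpt (d n : nat) (g : gidx d n) : point d :=
  fun j => powerRZ 2 (3 - Z.of_nat n) * INR (nat_of_ord (g j)).

Definition sn (d n : nat) : nat := #|gidx d n|.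

(* The random set  \bigcup_{i=1}^{l} {X_i + y_i}, for the outcome xs = (X_1..X_l).
   y i is the (deterministic) function of (X_1,...,X_{i}) (0-based: of the
   prefix take i xs) giving the F_{i+1}-measurable shift of the (i+1)-th point. *)
Definition shifted_set (d n l : nat) (y : nat -> seq (gidx d n) -> point d)
  (xs : l.-tuple (gidx d n)) : point d -> Prop :=
  fun p => exists i : 'I_l, p = padd (gpt (tnth xs i)) (y (nat_of_ord i) (take i xs)).

Definition bad_event (d n l : nat) (y : nat -> seq (gidx d n) -> point d)
  (xs : l.-tuple (gidx d n)) : Prop :=
  Nn_lt n (shifted_set y xs) (sn d n).

Definition indicator (P : Prop) : bool :=
  if excluded_middle_informative P then true else false.

(* Pr(N_n(\bigcup_{i<=l} {X_i+y_i}) < s_n) under X_1..X_l i.i.d. uniform on S_n: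
   the uniform (product) probability on l-tuples of grid indices. *)
Definition prob_bad (d n l : nat) (y : nat -> seq (gidx d n) -> point d) : R :=
  INR (count (fun xs => indicator (bad_event y xs)) (enum {: l.-tuple (gidx d n)}))
  / INR #|{: l.-tuple (gidx d n)}|.

(* Read the sample greedily: keep X_i + y_i when it is more than 2^-n away from every
   point kept so far.  The kept points are a 2^-n-separated subset of the union, so on the
   bad event fewer than s_n points are kept after l steps.  The grid has spacing 8 2^-n,
   hence each kept point is within 2^-n of at most one of the s_n candidates X_i + y_i:
   while fewer than s_n points are kept, some value of X_i is accepted, whatever the
   history.  The time to keep s_n points thus has expectation at most s_n^2, and Markov's
   inequality with l = s_n^2 k 2^n concludes. *)

From Stdlib Require Import Reals Lra ClassicalEpsilon.
From mathcomp Require Import all_boot zify.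
Set Implicit Arguments. Unset Strict Implicit. Unset Printing Implicit Defensive.

Section Runs.
Variables (G : finType) (T : Type) (step : seq G -> T -> G -> T).

Fixpoint run (h : seq G) (t : T) (r : seq G) : T :=
  if r is x :: r' then run (rcons h x) (step h t x) r' else t.

Lemma run_ind (P : T -> Prop) (x0 : G) h t r :
  P t -> (forall i t', i < size r -> P t' -> P (step (h ++ take i r) t' (nth x0 r i))) ->
  P (run h t r).
Proof.
elim: r h t => [//|x r IH] h t Pt Pstep /=; apply: IH.
  by have := Pstep 0 t isT Pt; rewrite take0 cats0.
by move=> i t' ir Pt'; have := Pstep i.+1 t' ir Pt'; rewrite /= cat_rcons.
Qed.

Fixpoint words (l : nat) : seq (seq G) :=
  if l is l'.+1 then [seq x :: r | x <- enum G, r <- words l'] else [:: [::]].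

Lemma mem_words l r : (r \in words l) = (size r == l).
Proof.
elim: l r => [|l IH] [|x r] //=.
  by apply/negbTE/allpairsP => -[[x' r'] /= [_ _]].
rewrite eqSS -IH; apply/allpairsP/idP => [[[x' r'] /= [_ wr' [_ ->]]] //|wr].
by exists (x, r); rewrite mem_enum.
Qed.

Lemma uniq_words l : uniq (words l).
Proof.
elim: l => [//|l IH] /=; apply: allpairs_uniq => //; first exact: enum_uniq.
by move=> [a b] [c e] _ _ /= [-> ->].
Qed.

Lemma perm_tuples_words l : perm_eq [seq val t | t <- enum {: l.-tuple G}] (words l).
Proof.
apply: uniq_perm; first by rewrite map_inj_uniq ?enum_uniq //; exact: val_inj.
  exact: uniq_words.
move=> r; rewrite mem_words; apply/mapP/idP => [[t _ ->]|wr]; first by rewrite size_tuple.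
by exists (Tuple wr); rewrite ?mem_enum.
Qed.

Lemma count_words_cons (P : pred (seq G)) l :
  count P (words l.+1) = \sum_(x : G) count (fun r => P (x :: r)) (words l).
Proof.
by rewrite /= count_flatten sumnE !big_map; apply: eq_bigr => x _; rewrite count_map.
Qed.

Lemma count_words_le (P : pred (seq G)) l : count P (words l) <= #|G| ^ l.
Proof.
apply: leq_trans (count_size _ _) _.
by elim: l => [//|l IH]; rewrite /= size_allpairs -cardT expnS leq_mul2l IH orbT.
Qed.

Variables (rank : T -> nat) (s : nat).
Hypothesis rank_step : forall h t x, rank t <= rank (step h t x).
Hypothesis rank_step_progress : forall h t, rank t < s -> exists x, rank t < rank (step h t x).

Lemma rank_run h t r : rank t <= rank (run h t r).
Proof. by elim: r h t => [//|x r IH] h t /=; apply: leq_trans (rank_step h t x) (IH _ _). Qed.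

(* Markov's inequality for the time the rank needs to reach [s]: each step succeeds with
   probability at least [1 / #|G|], so the expected time is at most [(s - rank t) #|G|]. *)
Lemma count_words_run_lt l h t :
  l.+1 * count (fun r => rank (run h t r) < s) (words l) <= (s - rank t) * #|G| ^ l.+1.
Proof.
elim: l h t => [|l IH] h t.
  rewrite /= addn0 mul1n expn1; case: ltnP => //= lt_ts.
  have [x _] := rank_step_progress h lt_ts.
  by rewrite muln_gt0 subn_gt0 lt_ts; apply/card_gt0P; exists x.
have [le_st|lt_ts] := leqP s (rank t).
  rewrite (@eq_count _ _ pred0) ?count_pred0 ?muln0 // => r /=.
  by apply/negbTE; rewrite -leqNgt (leq_trans le_st) ?rank_run.
set N := #|G|; set good := fun x => rank t < rank (step h t x).
have step_bound x : (s - rank (step h t x)) + good x <= s - rank t.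
  by rewrite /good; case: ltnP => /=; have := rank_step h t x; lia.
have good_pos : 0 < \sum_(x : G) good x.
  have [x gx] := rank_step_progress h lt_ts.
  by rewrite (bigD1 x) //= addn_gt0 /good gx.
rewrite count_words_cons big_distrr /=.
apply: (@leq_trans (\sum_(x : G) ((s - rank (step h t x)) * N ^ l.+1 + N ^ l))).
  apply: leq_sum => x _; rewrite mulSn [X in X <= _]addnC.
  by apply: leq_add; [exact: (IH (rcons h x)) | exact: count_words_le].
have sum_step : (\sum_(x : G) (s - rank (step h t x))).+1 <= (s - rank t) * N.
  apply: leq_trans (_ : \sum_(x : G) (s - rank (step h t x)) + \sum_(x : G) good x <= _).
    by rewrite -addn1 leq_add2l.
  rewrite -big_split /= (@leq_trans (\sum_(x : G) (s - rank t))) //.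
    by apply: leq_sum => x _; exact: step_bound.
  by rewrite sum_nat_const mulnC.
rewrite big_split /= sum_nat_const -big_distrl /= -expnS -mulSnr (expnS N l.+1) mulnA.
by rewrite leq_mul2r sum_step orbT.
Qed.

End Runs.

Local Open Scope R_scope.

Lemma edist_sym d (p q : point d) : edist p q = edist q p.
Proof. by rewrite /edist; congr (sqrt (foldr _ _ _)); apply: eq_map => j; ring. Qed.

Lemma coord_le_edist d (p q : point d) (j : 'I_d) : Rabs (p j - q j) <= edist p q.
Proof.
rewrite /edist -sqrt_Rsqr_abs Rsqr_pow2; apply: sqrt_le_1_alt.
have sq_ge0 i : 0 <= (p i - q i) ^ 2 by apply: pow2_ge_0.
have : j \in enum 'I_d by rewrite mem_enum.
elim: (enum 'I_d) => [//|i s IH]; cbn [foldr map].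
have sum_ge0 : 0 <= foldr Rplus 0 [seq (p i - q i) ^ 2 | i <- s].
  by elim: s {IH} => [|i' s' IHs]; cbn [foldr map]; [lra | have := sq_ge0 i'; lra].
by rewrite in_cons => /orP [/eqP ->|/IH]; have := sq_ge0 i; lra.
Qed.

Lemma gpt_coord d n (g : gidx d n) (j : 'I_d) : gpt g j = 8 / 2 ^ n * INR (g j).
Proof.
rewrite /gpt /Z.sub powerRZ_add ?powerRZ_neg'; last lra.
by rewrite -pow_powerRZ /=; field; apply: pow_nonzero; lra.
Qed.

Lemma nat_eq_of_dist_lt1 (u v : nat) : Rabs (INR u - INR v) < 1 -> u = v.
Proof.
case: (ltngtP u v) => // [/ltP|/ltP] /le_INR; rewrite S_INR => h /Rabs_def2; lra.
Qed.

(* Grid points are [8 / 2^n] apart, so a ball of radius [2^-n] meets at most one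
   translate of the grid. *)
Lemma grid_close_eq d n (c a : point d) (x1 x2 : gidx d n) :
  edist (padd (gpt x1) c) a <= / 2 ^ n -> edist (padd (gpt x2) c) a <= / 2 ^ n ->
  x1 = x2.
Proof.
move=> h1 h2; apply/ffunP => j; apply: val_inj; apply: nat_eq_of_dist_lt1.
have e_gt0 : 0 < / 2 ^ n by apply/Rinv_0_lt_compat/pow_lt; lra.
have := Rle_trans _ _ _ (coord_le_edist _ _ j) h1.
have := Rle_trans _ _ _ (coord_le_edist _ _ j) h2.
rewrite /padd !gpt_coord /Rdiv; move: (/ 2 ^ n) e_gt0 => e e_gt0.
move: (INR (x1 j)) (INR (x2 j)) => u1 u2.
split_Rabs; nra.
Qed.

Lemma INR_expn (a b : nat) : INR (a ^ b)%N = INR a ^ b.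
Proof. by elim: b => [//|b IH]; rewrite expnS -multE mult_INR IH. Qed.

Lemma ratio_le_inv (a b c : nat) : (0 < c)%N -> (a * c <= b)%N -> INR a / INR b <= / INR c.
Proof.
move=> /ltP /lt_0_INR c_gt0; case: (posnP a) => [-> _|/ltP /lt_0_INR a_gt0 /leP /le_INR].
  by rewrite /Rdiv Rmult_0_l; left; apply: Rinv_0_lt_compat.
rewrite -multE mult_INR => le_acb.
have b_gt0 : 0 < INR b by apply: Rlt_le_trans le_acb; apply: Rmult_lt_0_compat.
have -> : INR a / INR b = INR a * INR c * / (INR b * INR c) by field; lra.
have -> : / INR c = INR b * / (INR b * INR c) by field; lra.
by apply: Rmult_le_compat_r => //; left; apply/Rinv_0_lt_compat/Rmult_lt_0_compat.
Qed.

Definition far_from d n (q : point d) (A : seq (point d)) : bool :=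
  all (fun a => Rlt_dec (/ 2 ^ n) (edist q a)) A.

Lemma separated_cons d n (X : point d -> Prop) (q : point d) (A : seq (point d)) :
  X q -> far_from n q A -> separated_in n X A -> separated_in n X (q :: A).
Proof.
move=> Xq /(all_nthP (fun _ => 0)) farq [XA sepA]; split=> [p [<-|/XA] //|].
have far_nth i : (i < size A)%N -> edist q (nth (fun _ => 0) A i) > / 2 ^ n.
  by move=> /farq; case: Rlt_dec.
move=> [|i] [|j] /= lti ltj neq.
- by case: neq.
- exact: far_nth.
- by rewrite edist_sym; exact: far_nth.
- by apply: sepA => // eq_ij; apply: neq; rewrite eq_ij.
Qed.

Lemma count_not_far d n (c : point d) (A : seq (point d)) :
  (count (fun x : gidx d n => ~~ far_from n (padd (gpt x) c) A) (enum (gidx d n))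
     <= size A)%N.
Proof.
elim: A => [|a A IH] /=; first by elim: (enum _).
set close := fun x : gidx d n => ~~ Rlt_dec (/ 2 ^ n) (edist (padd (gpt x) c) a).
have close_le x : close x -> edist (padd (gpt x) c) a <= / 2 ^ n.
  by rewrite /close; case: Rlt_dec => // not_far _; apply: Rnot_lt_le.
have count_close : (count close (enum (gidx d n)) <= 1)%N.
  case: (pickP close) => [x0 close_x0|no_close]; last by rewrite (eq_count no_close) count_pred0.
  apply: leq_trans (_ : count (pred1 x0) (enum (gidx d n)) <= 1)%N.
    by apply: sub_count => x /close_le close_x; apply/eqP/(grid_close_eq close_x)/close_le.
  by rewrite count_uniq_mem ?enum_uniq // leq_b1.
apply: (@leq_trans (count (predU close (fun x => ~~ far_from n (padd (gpt x) c) A))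
                          (enum (gidx d n)))).
  by apply: sub_count => x; rewrite /= negb_and.
by have := count_predUI close (fun x => ~~ far_from n (padd (gpt x) c) A) (enum (gidx d n)); lia.
Qed.

Lemma exists_far d n (c : point d) (A : seq (point d)) :
  (size A < sn d n)%N -> exists x : gidx d n, far_from n (padd (gpt x) c) A.
Proof.
move=> small; case: (pickP (fun x : gidx d n => far_from n (padd (gpt x) c) A)) => [x far_x|none].
  by exists x.
have := count_not_far n c A; rewrite (@eq_count _ _ predT) ?count_predT -?cardT => [|x].
  by rewrite leqNgt small.
by rewrite /= none.
Qed.

Section Greedy.
Variables (d n : nat) (y : nat -> seq (gidx d n) -> point d).

Definition greedy_step (h : seq (gidx d n)) (A : seq (point d)) (x : gidx d n) :=
  let q := padd (gpt x) (y (size h) h) in if far_from n q A then q :: A else A.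

Lemma size_greedy_step h A x : (size A <= size (greedy_step h A x))%N.
Proof. by rewrite /greedy_step; case: ifP => //= _; apply: leqnSn. Qed.

Lemma greedy_step_progress h A :
  (size A < sn d n)%N -> exists x, (size A < size (greedy_step h A x))%N.
Proof.
by move=> /(exists_far (y (size h) h)) [x far_x]; exists x; rewrite /greedy_step far_x.
Qed.

Lemma greedy_separated l (xs : l.-tuple (gidx d n)) :
  separated_in n (shifted_set y xs) (run greedy_step [::] [::] xs).
Proof.
apply: (run_ind _ (x0 := [ffun=> ord0])); first by split=> // p [].
move=> i A lt_i sepA; rewrite /greedy_step cat0s size_take lt_i.
case: ifP => // far_q; apply: separated_cons => //.
rewrite size_tuple in lt_i; exists (Ordinal lt_i).
by rewrite (tnth_nth [ffun=> ord0]).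
Qed.

End Greedy.

Theorem mainTheorem8 (d n k : nat) (hd : (0 < d)%N) (hn : (0 < n)%N) (hk : (0 < k)%N) :
  exists l : nat, (0 < l)%N /\
    forall y : nat -> seq (gidx d n) -> point d,
      Rle (@prob_bad d n l y) (Rinv (INR k * pow 2 n)).
Proof.
set s := sn d n.
have s_gt0 : (0 < s)%N by apply/card_gt0P; exists [ffun=> ord0].
exists (s ^ 2 * k * 2 ^ n)%N; split; first by rewrite !muln_gt0 expn_gt0 s_gt0 hk.
move=> y; set l := (s ^ 2 * k * 2 ^ n)%N.
rewrite /prob_bad card_tuple -/s; set bad := count _ (enum {: l.-tuple (gidx d n)}).
have bad_le_short :
    (bad <= count (fun r => size (run (greedy_step y) [::] [::] r) < s) (words _ l))%N.
  rewrite -(permP (perm_tuples_words _ l)) count_map; apply: sub_count => xs.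
  rewrite /indicator; case: excluded_middle_informative => // is_bad _.
  exact: is_bad _ (greedy_separated y xs).
have markov := count_words_run_lt (@size_greedy_step d n y) (@greedy_step_progress d n y) l
  [::] [::].
have -> : INR k * 2 ^ n = INR (k * 2 ^ n) by rewrite -multE mult_INR INR_expn.
apply: ratio_le_inv; first by rewrite muln_gt0 hk expn_gt0.
rewrite -(@leq_pmul2l (s ^ 2)) ?expn_gt0 ?s_gt0 // mulnCA [(s ^ 2 * _)%N]mulnA -/l mulnC.
apply: leq_trans (leq_mul (leqnSn l) bad_le_short) _; apply: leq_trans markov _.
by rewrite subn0 expnS [(s ^ 2)%N]expnS expn1 mulnA.
Qed.
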